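(* Let $i\in\{0,\dots,t-1\}$. There exists a subset $\mathcal X^*\subseteq\mathcal X$ of encoding items with total weight $w(\mathcal X^* )\le(3t-3i-2)\cdot B$ and total profit $p(\mathcal X^* )\ge(3t-3i-2)\cdot B+\left(\binom{t}{2}-\binom{i+1}{2}+\frac{i}{3}\right)\cdot 9nB$ if and only if the instance $\mathcal A_i$ has a solution, i.e., there exists $\mathcal A_i^*\subseteq\mathcal A_i$ with $|\mathcal A_i^*|=n$ and $\sum_{a\in\mathcal A_i^*}a=B_n$.
   Context: Let $n\ge1$, $B_n=\sum_{j=1}^{3n}(3n+1)^j$ and $\widetilde{\mathcal A}_n=\{(3n+1)^{j_1}+(3n+1)^{j_2}+(3n+1)^{j_3}: j_1,j_2,j_3\in\{1,\dots,3n\}\}$. Let $t$ be a power of two and, for each $i\in\{0,\dots,t-1\}$, let $\mathcal A_i=\{a^i_1,\dots,a^i_{3n}\}$ be a set of $3n$ integers from $\widetilde{\mathcal A}_n$ with $\sum_{j=1}^{3n}a^i_j=3B_n$. Let $X=3tnB_n$ and $B=B_n+nX$. For each $i\in\{0,\dots,t-1\}$ and $j\in\{1,\dots,3n\}$ there is an encoding item $x^i_j$ with weight $w(x^i_j)=X+a^i_j$ and profit $p(x^i_j)=X+a^i_j+3iB$; $\mathcal X$ is the set of all encoding items. For a set $\mathcal S$ of items, $w(\mathcal S)=\sum_{x\in\mathcal S}w(x)$ and $p(\mathcal S)=\sum_{x\in\mathcal S}p(x)$. *)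

From HB Require Import structures.
From mathcomp Require Import all_boot all_order all_algebra.
Set Implicit Arguments. Unset Strict Implicit. Unset Printing Implicit Defensive.

Definition Bn (n : nat) : nat := \sum_(1 <= j < (3 * n).+1) (3 * n + 1) ^ j.

Definition in_Atilde (n a : nat) : Prop :=
  exists j1 j2 j3 : nat,
    [/\ 1 <= j1 <= 3 * n, 1 <= j2 <= 3 * n, 1 <= j3 <= 3 * n &
        a = (3 * n + 1) ^ j1 + (3 * n + 1) ^ j2 + (3 * n + 1) ^ j3].

Definition Xc (t n : nat) : nat := 3 * t * n * Bn n.
Definition Bc (t n : nat) : nat := Bn n + n * Xc t n.

(* Encoding item x^i_j is represented by the index pair (i, j), j 0-based;
   a i j is a^i_{j+1}. *)
Definition item_weight t n (a : 'I_t -> 'I_(3 * n) -> nat)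
  (x : 'I_t * 'I_(3 * n)) : nat := Xc t n + a x.1 x.2.
Definition item_profit t n (a : 'I_t -> 'I_(3 * n) -> nat)
  (x : 'I_t * 'I_(3 * n)) : nat := Xc t n + a x.1 x.2 + 3 * x.1 * Bc t n.

Definition wS t n a (S : {set 'I_t * 'I_(3 * n)}) : nat :=
  \sum_(x in S) item_weight a x.
Definition pS t n a (S : {set 'I_t * 'I_(3 * n)}) : nat :=
  \sum_(x in S) item_profit a x.

Definition has_solution t n (a : 'I_t -> 'I_(3 * n) -> nat) (i : 'I_t) : Prop :=
  exists S : {set 'I_(3 * n)}, #|S| = n /\ \sum_(j in S) a i j = Bn n.

From HB Require Import structures.
From mathcomp Require Import all_boot all_order all_algebra.
From mathcomp Require Import zify ring.
Import Order.TTheory GRing.Theory Num.Theory.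
Set Implicit Arguments. Unset Strict Implicit. Unset Printing Implicit Defensive.

(* Every item's profit is its weight plus 3B times its level, so under the
   capacity (3r+1)B, with r = t - i - 1 levels above i, the profit target is a
   lower bound on the total level of the packing.  Since X dominates every sum of
   a-values, the capacity admits at most (3r+1)n items, and for k items the
   total level equals i k + 3n C(r+1, 2) minus a nonnegative deviation that
   vanishes exactly on the sets made of all items above level i plus some
   items of level i.  Hence the target forces such a set with exactly (3r+1)n
   items and weight exactly (3r+1)B; comparing base-X digits of the weight,
   its items of level i are n values summing to B_n. *)

Lemma bin2D p q : 'C(p + q, 2) = 'C(p, 2) + 'C(q, 2) + p * q.
Proof.
elim: q => [|q IHq]; first by rewrite addn0 bin0n muln0 !addn0.
by rewrite addnS !binS !bin1 IHq; lia.
Qed.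

Lemma sum_subn_ord t i : \sum_(k < t) (k - i) = 'C(t - i, 2).
Proof.
elim: t => [|t IHt]; first by rewrite big_ord0.
rewrite big_ord_recr /= IHt; case: (leqP i t) => [le_it|lt_ti].
  by rewrite subSn // binS bin1.
by have [-> ->] : t - i = 0 /\ t.+1 - i = 0 by lia.
Qed.

Lemma sum_ord_gtn t i c : \sum_(k < t) (if i < k then c else 0) = (t - i.+1) * c.
Proof.
elim: t => [|t IHt]; first by rewrite big_ord0.
by rewrite big_ord_recr /= IHt; case: (ltnP i t) => ?; nia.
Qed.

Lemma mulnD_small_eq X k K A b :
  A <= X -> 0 < b < X -> X * k + A = X * K + b -> k = K /\ A = b.
Proof.
move=> le_AX /andP[b_gt0 lt_bX] eq_kK.
suff eq_k : k = K by split; last by move: eq_kK; rewrite eq_k => /addnI.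
case: (ltngtP k K) => // [lt_kK|lt_Kk].
- have : X * k.+1 <= X * K by rewrite leq_mul2l lt_kK orbT.
  lia.
- have : X * K.+1 <= X * k by rewrite leq_mul2l lt_Kk orbT.
  lia.
Qed.

Lemma tight_budget b c w u p d :
  0 < b -> w <= c -> c + b * u <= w + b * p -> p + d <= u -> d = 0 /\ w = c.
Proof.
move=> b_gt0 le_wc le_cu le_pu.
have le_bpu : b * p <= b * u by rewrite leq_mul2l (leq_trans (leq_addr d p)) ?orbT.
have eq_bpu : b * p = b * u by lia.
move/eqP: eq_bpu; rewrite eqn_mul2l (gtn_eqF b_gt0) => /eqP eq_pu.
by split; lia.
Qed.

Section Levels.
Variables (t m : nat) (i : 'I_t).

Lemma sum_pair_rows (S : {set 'I_t * 'I_m}) (F : 'I_t -> 'I_m -> nat) :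
  \sum_(x in S) F x.1 x.2 = \sum_(i0 < t) \sum_(j < m | (i0, j) \in S) F i0 j.
Proof. by rewrite pair_big_dep; apply: eq_bigl => -[]. Qed.

Definition upper_set (Si : {set 'I_m}) : {set 'I_t * 'I_m} :=
  [set x : 'I_t * 'I_m | (i < x.1) || (x.1 == i) && (x.2 \in Si)].

Lemma sum_upper_set (Si : {set 'I_m}) (F : 'I_t -> 'I_m -> nat) :
  \sum_(x in upper_set Si) F x.1 x.2 =
  \sum_(i0 < t) (if i < i0 then \sum_(j < m) F i0 j else 0) + \sum_(j in Si) F i j.
Proof.
rewrite sum_pair_rows (bigD1 i) //= [in RHS](bigD1 i) //= ltnn add0n addnC.
congr (_ + _); last by apply: eq_bigl => j; rewrite inE /= ltnn eqxx.
apply: eq_bigr => i0 ne_i0i; case: (ltnP i i0) => [lt_ii0|le_i0i].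
  by apply: eq_bigl => j; rewrite inE /= lt_ii0.
by rewrite big_pred0 // => j; rewrite inE /= ltnNge le_i0i (negbTE ne_i0i).
Qed.

Lemma card_upper_set (Si : {set 'I_m}) : #|upper_set Si| = (t - i.+1) * m + #|Si|.
Proof.
rewrite -sum1_card -[#|Si|]sum1_card (sum_upper_set Si (fun _ _ => 1)) -sum_ord_gtn.
by congr (_ + _); apply: eq_bigr => k _; rewrite sum_nat_const card_ord muln1.
Qed.

Definition level_dev (S : {set 'I_t * 'I_m}) : nat :=
  \sum_x (if x \in S then i - x.1 else x.1 - i).

Lemma sum_fst_add_level_dev (S : {set 'I_t * 'I_m}) :
  \sum_(x in S) (x.1 : nat) + level_dev S = i * #|S| + m * 'C(t - i, 2).
Proof.
have sum_dev_all : m * 'C(t - i, 2) = \sum_(x : 'I_t * 'I_m) (x.1 - i).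
  rewrite -sum_subn_ord big_distrr.
  rewrite -(pair_bigA _ (fun (i0 : 'I_t) (_ : 'I_m) => i0 - i)).
  by apply: eq_bigr => i0 _; rewrite sum_nat_const card_ord.
rewrite sum_dev_all mulnC -sum_nat_const.
rewrite big_mkcond [in RHS]big_mkcond -!big_split /=.
by apply: eq_bigr => x _; case: ifP => _; lia.
Qed.

Lemma level_dev_upper_set (Si : {set 'I_m}) : level_dev (upper_set Si) = 0.
Proof.
apply/eqP; rewrite sum_nat_eq0; apply/forallP => -[x y] /=.
rewrite inE /=; apply/eqP; case: (ltnP i x) => [|le_xi] /=; first lia.
by case: (x =P i) => [->|] /=; [rewrite subnn; case: (y \in Si) | lia].
Qed.

Lemma level_dev_eq0 (S : {set 'I_t * 'I_m}) :
  level_dev S = 0 -> S = upper_set [set j | (i, j) \in S].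
Proof.
move/eqP; rewrite sum_nat_eq0 => /forallP dev0.
apply/setP => -[x y]; rewrite !inE /=.
move: (dev0 (x, y)); case: (boolP ((x, y) \in S)) => inS /= /eqP dev_xy.
  case: (ltnP i x) => //= le_xi.
  have eq_xi : x = i by apply: val_inj => /=; lia.
  by rewrite -eq_xi eqxx inS.
have -> : (i < x) = false by lia.
by case: eqP => // eq_xi; rewrite -eq_xi (negbTE inS).
Qed.

End Levels.

Section RationalBounds.
Variables (R : numFieldType) (t i r : nat).
Hypothesis t_split : t = i.+1 + r.

Lemma capacity_factorE : (3 * (t%:R : R) - 3 * i%:R - 2 = (3 * r + 1)%N%:R)%R.
Proof. by rewrite t_split -[i.+1]addn1 !natrD; ring. Qed.

Lemma profit_bonusE n B :
  ((('C(t, 2))%:R - ('C(i.+1, 2))%:R + i%:R / 3) * (9 * n%:R * B%:R)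
   = (3 * B * (3 * n * 'C(r.+1, 2) + i * ((3 * r + 1) * n)))%N%:R :> R)%R.
Proof.
rewrite t_split bin2D [in RHS]binS bin1 -[i.+1]addn1 !(natrM, natrD).
by field.
Qed.

End RationalBounds.

Section Encoding.
Variables (n t : nat) (a : 'I_t -> 'I_(3 * n) -> nat) (i : 'I_t).
Hypothesis n_gt0 : 0 < n.
Hypothesis sum_row : forall i0 : 'I_t, \sum_(j < 3 * n) a i0 j = 3 * Bn n.

Local Notation r := (t - i.+1).
Local Notation X := (Xc t n).
Local Notation B := (Bc t n).

Lemma wS_card (S : {set 'I_t * 'I_(3 * n)}) :
  wS a S = X * #|S| + \sum_(x in S) a x.1 x.2.
Proof. by rewrite /wS /item_weight big_split /= sum_nat_const mulnC. Qed.

Lemma pS_wS (S : {set 'I_t * 'I_(3 * n)}) :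
  pS a S = wS a S + 3 * B * \sum_(x in S) (x.1 : nat).
Proof.
rewrite /pS /wS /item_profit /item_weight big_split /= big_distrr /=.
by congr (_ + _); apply: eq_bigr => x _; ring.
Qed.

Lemma Bn_gt0 : 0 < Bn n.
Proof. by rewrite /Bn big_ltn ?expn1; lia. Qed.

Lemma sum_items_le (S : {set 'I_t * 'I_(3 * n)}) : \sum_(x in S) a x.1 x.2 <= X.
Proof.
have sum_all : \sum_(x : 'I_t * 'I_(3 * n)) a x.1 x.2 = t * (3 * Bn n).
  rewrite -(pair_bigA _ (fun i0 j => a i0 j)) /=.
  by under eq_bigr do rewrite sum_row; rewrite sum_nat_const card_ord.
apply: leq_trans (_ : _ <= t * (3 * Bn n)) _; last by rewrite /Xc; nia.
by rewrite -sum_all [leqRHS](bigID [in S]) leq_addr.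
Qed.

Lemma sum_upper_items (Si : {set 'I_(3 * n)}) :
  \sum_(x in upper_set i Si) a x.1 x.2 = r * (3 * Bn n) + \sum_(j in Si) a i j.
Proof.
rewrite sum_upper_set -sum_ord_gtn; congr (_ + _).
by apply: eq_bigr => k _; rewrite sum_row.
Qed.

Local Notation m := (3 * r + 1).
Local Notation target := (m * B + 3 * B * (3 * n * 'C(r.+1, 2) + i * (m * n))).

Lemma upper_set_meets_target (Si : {set 'I_(3 * n)}) :
  #|Si| = n -> \sum_(j in Si) a i j = Bn n ->
  wS a (upper_set i Si) = m * B /\ pS a (upper_set i Si) = target.
Proof.
move=> card_Si sum_Si.
have wS_eq : wS a (upper_set i Si) = m * B.
  by rewrite wS_card card_upper_set sum_upper_items card_Si sum_Si /Bc; ring.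
split=> //; rewrite pS_wS wS_eq.
have := sum_fst_add_level_dev i (upper_set i Si).
rewrite level_dev_upper_set addn0 card_upper_set card_Si -(subnSK (ltn_ord i)) => ->.
ring.
Qed.

Lemma target_solution (S : {set 'I_t * 'I_(3 * n)}) :
  wS a S <= m * B -> target <= pS a S -> has_solution a i.
Proof.
move=> le_wS ge_pS.
have lt_it := ltn_ord i.
have Bn_pos := Bn_gt0.
have small_mBn : m * Bn n < X.
  rewrite /Xc ltn_pmul2r //; apply: (@leq_trans (3 * t)); first lia.
  by rewrite leq_pmulr.
have card_le : #|S| <= m * n.
  have X_pos : 0 < X by apply: leq_ltn_trans small_mBn.
  rewrite -ltnS -(ltn_pmul2l X_pos).
  by move: le_wS; rewrite wS_card /Bc mulnDr mulnA mulnS; lia.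
have [dev0 eq_wS] : level_dev i S = 0 /\ wS a S = m * B.
  apply: (@tight_budget (3 * B) _ _ _ (\sum_(x in S) (x.1 : nat)) _ _ le_wS).
  - by rewrite muln_gt0 /Bc; lia.
  - by rewrite -pS_wS; exact: ge_pS.
  have := sum_fst_add_level_dev i S; rewrite -(subnSK lt_it) => ->.
  by rewrite addnC leq_add2l leq_mul2l card_le orbT.
have [eq_card eq_A] : #|S| = m * n /\ \sum_(x in S) a x.1 x.2 = m * Bn n.
  apply: mulnD_small_eq (sum_items_le S) _ _.
    by rewrite small_mBn andbT muln_gt0 Bn_pos addn1.
  by rewrite -wS_card eq_wS /Bc; ring.
have S_eq := level_dev_eq0 dev0; set Si := [set j | _] in S_eq.
exists Si; move: eq_card eq_A; rewrite S_eq card_upper_set sum_upper_items.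
by split; nia.
Qed.

End Encoding.

Theorem lemma3 (n t : nat) (a : 'I_t -> 'I_(3 * n) -> nat) (i : 'I_t) :
  1 <= n ->
  (exists k, t = 2 ^ k) ->
  (forall i0 : 'I_t, injective (a i0)) ->
  (forall i0 j, in_Atilde n (a i0 j)) ->
  (forall i0 : 'I_t, \sum_(j < 3 * n) a i0 j = 3 * Bn n) ->
  (exists XS : {set 'I_t * 'I_(3 * n)},
      ((wS a XS)%:R <= (3 * (t%:R : rat) - 3 * (i : nat)%:R - 2) * (Bc t n)%:R)%R /\
      ((pS a XS)%:R >= (3 * (t%:R : rat) - 3 * (i : nat)%:R - 2) * (Bc t n)%:R
          + (('C(t, 2))%:R - ('C(i.+1, 2))%:R + (i : nat)%:R / 3)
            * (9 * (n%:R : rat) * (Bc t n)%:R))%R)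
  <-> has_solution a i.
Proof.
move=> n_gt0 _ _ _ sum_row.
have t_split : t = i.+1 + (t - i.+1) by rewrite subnKC.
rewrite (capacity_factorE _ t_split) (profit_bonusE _ t_split) -natrM -natrD.
split=> [[S []]|[Si [card_Si sum_Si]]].
- by rewrite !ler_nat; apply: target_solution.
- have [wS_eq pS_eq] := upper_set_meets_target sum_row card_Si sum_Si.
  by exists (upper_set i Si); rewrite !ler_nat wS_eq pS_eq.
Qed.
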